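(* Let $D_K$ be a relative $K$-entropy satisfying Properties (a), (b), (c) and (d) below, and let $H_K$ be the associated conditional entropy, defined by one of the two forms below. Let $X=\{X_j\}$ be an arbitrary POVM on $\mathcal{H}_A$. Then for every density operator $\rho_{AB}$, $$H_K(X|B)\ge\log\frac{1}{c(X)},\qquad c(X):=\max_j\|X_j\|_\infty .$$
   Context: All Hilbert spaces are finite-dimensional; $\log$ has an arbitrary but fixed base; $\|\cdot\|_\infty$ is the largest singular value. A relative $K$-entropy $D_K$ assigns to every pair $(S,T)$ of positive semidefinite operators on a common Hilbert space an extended real number $D_K(S\|T)$. Properties: (a) for every trace-preserving completely positive map (TPCPM) $\mathcal{E}$ (possibly between different spaces), $D_K(\mathcal{E}(S)\|\mathcal{E}(T))\le D_K(S\|T)$; (b) for positive semidefinite $S,T$ on $\mathcal{H}$ and $T'$ on $\mathcal{H}'$, $D_K(S\oplus 0\,\|\,T\oplus T')=D_K(S\|T)$; (c) for every constant $c>0$, $D_K(S\|cT)=D_K(S\|T)+\log\frac1c$; (d) $D_K(\rho\|\rho)=0$ for every density operator $\rho$. The conditional $K$-entropy of a density operator $\rho_{AB}$ is either $H_K(A|B)=-D_K(\rho_{AB}\|\mathbb{1}_A\otimes\rho_B)$ for all $\rho_{AB}$, or $H_K(A|B)=\max_{\sigma_B}[-D_K(\rho_{AB}\|\mathbb{1}_A\otimes\sigma_B)]$ for all $\rho_{AB}$, maximum over density operators $\sigma_B$. For a POVM $X=\{X_j\}$ on $\mathcal{H}_A$, let $\mathcal{X}:\rho_A\mapsto\sum_j|j\rangle\langle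 j|_X\,\mathrm{Tr}(X_j\rho_A)$ with $\{|j\rangle\}$ orthonormal in a register $\mathcal{H}_X$; $H_K(X|B)$ denotes $H_K$ of the state $(\mathcal{X}\otimes\mathcal{I})(\rho_{AB})$ (register $X$ given $B$). *)

From HB Require Import structures.
From mathcomp Require Import all_boot all_order all_algebra.
From mathcomp Require Import complex mxtens.
From mathcomp Require Import classical_sets reals ereal exp.

Set Implicit Arguments.
Unset Strict Implicit.
Unset Printing Implicit Defensive.

Import Order.TTheory GRing.Theory Num.Theory.
Local Open Scope ring_scope.
Local Open Scope classical_set_scope.

Section QDefs.
Variable R : realType.
Local Notation C := (R[i]).

Definition adjmx {m n} (A : 'M[C]_(m, n)) : 'M[C]_(n, m) :=
  (map_mx (@Num.conj C) A)^T.

Definition psd {n} (A : 'M[C]_n) : Prop :=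
  adjmx A = A /\ forall v : 'cV[C]_n, 0 <= (adjmx v *m A *m v) 0 0.

Definition density {n} (rho : 'M[C]_n) : Prop := psd rho /\ \tr rho = 1.

Definition vnorm {n} (v : 'cV[C]_n) : R :=
  Num.sqrt (\sum_i ((complex.Re (v i 0)) ^+ 2 + (complex.Im (v i 0)) ^+ 2)).

Definition opnorm {m n} (A : 'M[C]_(m, n)) : R :=
  sup [set vnorm (A *m v) | v in [set v : 'cV[C]_n | vnorm v = 1]].

Definition logb (b x : R) : R := ln x / ln b.

Definition linmap {n m} (E : 'M[C]_n -> 'M[C]_m) : Prop :=
  forall (a : C) (x y : 'M[C]_n), E (a *: x + y) = a *: E x + E y.

(* (E (x) id_k) acting on H_n (x) H_k, tensor index convention of mxtens *)
Definition ampl {n m} k (E : 'M[C]_n -> 'M[C]_m) (M : 'M[C]_(n * k))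
  : 'M[C]_(m * k) :=
  \matrix_(p, q)
    E (\matrix_(i, j) M (mxtens_index (i, (mxtens_unindex p).2))
                        (mxtens_index (j, (mxtens_unindex q).2)))
      (mxtens_unindex p).1 (mxtens_unindex q).1.

Arguments ampl {n m} k E M.

Definition tpcpm {n m} (E : 'M[C]_n -> 'M[C]_m) : Prop :=
  [/\ linmap E,
      (forall M, \tr (E M) = \tr M) &
      (forall k (M : 'M[C]_(n * k)), psd M -> psd (ampl k E M))].

Definition ptrA {a b} (M : 'M[C]_(a * b)) : 'M[C]_b :=
  \matrix_(j, l) \sum_(i < a) M (mxtens_index (i, j)) (mxtens_index (i, l)).

Definition Dfam := forall n, 'M[C]_n -> 'M[C]_n -> \bar R.

Definition propA (D : Dfam) : Prop :=
  forall n m (E : 'M[C]_n -> 'M[C]_m), (0 < n)%N -> (0 < m)%N -> tpcpm E ->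
    forall S T, psd S -> psd T -> (D m (E S) (E T) <= D n S T)%E.

Definition propB (D : Dfam) : Prop :=
  forall n m, (0 < n)%N -> (0 < m)%N ->
    forall (S T : 'M[C]_n) (T' : 'M[C]_m), psd S -> psd T -> psd T' ->
      D (n + m)%N (block_mx S 0 0 0) (block_mx T 0 0 T') = D n S T.

Definition propC (b : R) (D : Dfam) : Prop :=
  forall n, (0 < n)%N -> forall (S T : 'M[C]_n) (c : R), psd S -> psd T ->
    0 < c -> D n S ((c%:C)%C *: T) = (D n S T + (logb b (1 / c))%:E)%E.

Definition propD (D : Dfam) : Prop :=
  forall n, (0 < n)%N -> forall rho : 'M[C]_n, density rho -> D n rho rho = 0%E.

Inductive cform := CondPlain | CondOpt.

Definition HK (f : cform) (D : Dfam) {a b} (rho : 'M[C]_(a * b)) : \bar R :=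
  match f with
  | CondPlain => (- D _ rho (1%:M *t ptrA rho))%E
  | CondOpt => ereal_sup [set (- D _ rho (1%:M *t s))%E
                          | s in [set s : 'M[C]_b | density s]]
  end.

Definition povm {a k} (X : 'I_k -> 'M[C]_a) : Prop :=
  (forall j, psd (X j)) /\ \sum_j X j = 1%:M.

Definition measmap {a k} (X : 'I_k -> 'M[C]_a) (rho : 'M[C]_a) : 'M[C]_k :=
  \matrix_(i, j) (if i == j then \tr (X i *m rho) else 0).

Definition cX {a k} (X : 'I_k -> 'M[C]_a) : R :=
  \big[Num.max/0]_(j < k) opnorm (X j).

End QDefs.

Arguments ampl {R n m} k E M.

(* Write [S = (X (x) id)(rho) = sum_j |j><j| (x) G(X_j)] with [G(Y) = Tr_A[(Y (x) 1) rho]],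
   which is positive in [Y]. Since [0 <= X_j <= c(X) 1], the operator
   [c(X) (1 (x) Tr_X S) - S = sum_j |j><j| (x) G(c(X) 1 - X_j)] is positive. Whenever
   [S <= c T], monotonicity (a) under the channel [S (+) T' |-> S + T'] gives
   [D(S || c T) <= D(S (+) 0 || S (+) (c T - S)) = D(S || S) = 0] by (b) and (d), i.e.
   [D(S || T) <= log c] by (c). With [T = 1 (x) Tr_X S] this is the plain conditional
   entropy, and the optimised one is at least its value at [sigma = Tr_X S]. *)

From mathcomp Require Import all_boot all_order all_algebra.
From mathcomp Require Import complex mxtens spectral sesquilinear.
From mathcomp Require Import classical_sets reals ereal.
From mathcomp Require Import lra.
Import Order.TTheory GRing.Theory Num.Theory.
Local Open Scope ring_scope.

Set Implicit Arguments.
Unset Strict Implicit.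
Unset Printing Implicit Defensive.

Section Adjoint.
Variable R : realType.
Local Notation C := (R[i]).

Lemma adjmxE m n (A : 'M[C]_(m, n)) i j : adjmx A i j = (A j i)^*.
Proof. by rewrite !mxE. Qed.

Lemma adjmxK m n (A : 'M[C]_(m, n)) : adjmx (adjmx A) = A.
Proof. by apply/matrixP=> i j; rewrite !mxE conjCK. Qed.

Lemma adjmx_mul m n p (A : 'M[C]_(m, n)) (B : 'M[C]_(n, p)) :
  adjmx (A *m B) = adjmx B *m adjmx A.
Proof.
apply/matrixP=> i j; rewrite !mxE rmorph_sum; apply: eq_bigr => l _.
by rewrite !mxE rmorphM mulrC.
Qed.

Lemma adjmxD m n (A B : 'M[C]_(m, n)) : adjmx (A + B) = adjmx A + adjmx B.
Proof. by apply/matrixP=> i j; rewrite !mxE rmorphD. Qed.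

Lemma adjmx0 m n : adjmx (0 : 'M[C]_(m, n)) = 0.
Proof. by apply/matrixP=> i j; rewrite !mxE rmorph0. Qed.

Lemma adjmxZ m n (c : C) (A : 'M[C]_(m, n)) : adjmx (c *: A) = c^* *: adjmx A.
Proof. by apply/matrixP=> i j; rewrite !mxE rmorphM. Qed.

Lemma adjmx_scalar n (c : C) : adjmx (c%:M : 'M[C]_n) = c^*%:M.
Proof. by apply/matrixP=> i j; rewrite !mxE eq_sym rmorphMn. Qed.

Lemma adjmx1 n : adjmx (1%:M : 'M[C]_n) = 1%:M.
Proof. by rewrite adjmx_scalar conjC1. Qed.

Lemma adjmx_delta m n (i : 'I_m) (j : 'I_n) :
  adjmx (delta_mx i j : 'M[C]_(m, n)) = delta_mx j i.
Proof. by apply/matrixP=> p q; rewrite !mxE rmorph_nat andbC. Qed.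

Lemma adjmx_diag n (d : 'rV[C]_n) :
  adjmx (diag_mx d) = diag_mx (\row_i (d 0 i)^*).
Proof. by apply/matrixP=> p q; rewrite !mxE rmorphMn; case: eqVneq => [->|]. Qed.

Lemma adjmx_tens m n p q (A : 'M[C]_(m, n)) (B : 'M[C]_(p, q)) :
  adjmx (A *t B) = adjmx A *t adjmx B.
Proof. by rewrite /adjmx map_mxT trmx_tens. Qed.

Lemma adjmx_row m n1 n2 (A : 'M[C]_(m, n1)) (B : 'M[C]_(m, n2)) :
  adjmx (row_mx A B) = col_mx (adjmx A) (adjmx B).
Proof. by rewrite /adjmx map_row_mx tr_row_mx. Qed.

Lemma adjmx_col m1 m2 n (A : 'M[C]_(m1, n)) (B : 'M[C]_(m2, n)) :
  adjmx (col_mx A B) = row_mx (adjmx A) (adjmx B).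
Proof. by rewrite /adjmx map_col_mx tr_col_mx. Qed.

Lemma adjmx_trC m n (A : 'M[C]_(m, n)) : adjmx A = (A ^t*)%sesqui.
Proof. by rewrite /adjmx map_trmx. Qed.

End Adjoint.

Section Positivity.
Variable R : realType.
Local Notation C := (R[i]).

Lemma quad_delta n (A : 'M[C]_n) (i : 'I_n) :
  (adjmx (delta_mx i 0 : 'cV[C]_n) *m A *m (delta_mx i 0 : 'cV[C]_n)) 0 0 = A i i.
Proof. by rewrite adjmx_delta -rowE -colE !mxE. Qed.

Lemma psd_diag_ge0 n (A : 'M[C]_n) : psd A -> forall i, 0 <= A i i.
Proof. by move=> [_ qA] i; rewrite -quad_delta. Qed.

Lemma psd_gram p n (W : 'M[C]_(p, n)) : psd (adjmx W *m W).
Proof.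
split=> [|v]; first by rewrite adjmx_mul adjmxK.
rewrite -!mulmxA mulmxA -adjmx_mul !mxE; apply: sumr_ge0 => i _.
by rewrite !mxE mulrC mul_conjC_ge0.
Qed.

Lemma psd_adj_mul n m (V : 'M[C]_(n, m)) (A : 'M[C]_n) :
  psd A -> psd (adjmx V *m A *m V).
Proof.
move=> [hA qA]; split=> [|v]; first by rewrite !adjmx_mul adjmxK hA mulmxA.
by have := qA (V *m v); rewrite adjmx_mul !mulmxA.
Qed.

Lemma psd0 n : psd (0 : 'M[C]_n).
Proof. by split=> [|v]; [rewrite adjmx0 | rewrite mulmx0 mul0mx mxE]. Qed.

Lemma psdD n (A B : 'M[C]_n) : psd A -> psd B -> psd (A + B).
Proof.
move=> [hA qA] [hB qB]; split=> [|v]; first by rewrite adjmxD hA hB.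
by rewrite mulmxDr mulmxDl mxE addr_ge0.
Qed.

Lemma psd_sum n I (r : seq I) (P : pred I) (F : I -> 'M[C]_n) :
  (forall i, P i -> psd (F i)) -> psd (\sum_(i <- r | P i) F i).
Proof.
move=> h; elim/big_rec: _ => [|i x Pi hx]; first exact: psd0.
exact: psdD (h i Pi) hx.
Qed.

Lemma psd1 n : psd (1%:M : 'M[C]_n).
Proof. by rewrite -(mulmx1 1%:M) -{1}adjmx1; exact: psd_gram. Qed.

Lemma psd_delta n (j : 'I_n) : psd (delta_mx j j : 'M[C]_n).
Proof.
rewrite -(mul_delta_mx (0 : 'I_1)) -adjmx_delta; exact: psd_gram.
Qed.

Lemma psd_block n m (S : 'M[C]_n) (T : 'M[C]_m) :
  psd S -> psd T -> psd (block_mx S 0 0 T).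
Proof.
move=> hS hT.
have -> : block_mx S 0 0 T =
  adjmx (row_mx 1%:M 0 : 'M[C]_(n, n + m)) *m S *m row_mx 1%:M 0 +
  adjmx (row_mx 0 1%:M : 'M[C]_(m, n + m)) *m T *m row_mx 0 1%:M.
  rewrite !adjmx_row !adjmx1 !adjmx0 [col_mx _ _ *m S]mul_col_mx.
  rewrite [col_mx _ _ *m T]mul_col_mx !mul_col_row add_block_mx.
  by rewrite !mul1mx !mul0mx !mulmx0 !mulmx1 !addr0 !add0r.
by apply: psdD; apply: psd_adj_mul.
Qed.

Lemma psd_spectral n (A : 'M[C]_n) : psd A ->
  exists (P : 'M[C]_n) (d : 'rV[C]_n),
   [/\ P *m adjmx P = 1%:M, adjmx P *m P = 1%:M,
       A = adjmx P *m diag_mx d *m P & forall i, 0 <= d 0 i].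
Proof.
move=> [hA qA]; set P := spectralmx A; set d := spectral_diag A.
have /orthomx_spectralP eA : A \is normalmx by apply/normalmxP; rewrite -adjmx_trC hA.
have PP : P *m adjmx P = 1%:M by rewrite adjmx_trC; apply/unitarymxP/spectral_unitarymx.
have PP' : adjmx P *m P = 1%:M by apply: mulmx1C.
have eA' : A = adjmx P *m diag_mx d *m P.
  by rewrite adjmx_trC -invmx_unitary ?spectral_unitarymx.
exists P, d; split => // i.
have hD : P *m A *m adjmx P = diag_mx d.
  by rewrite eA' !mulmxA PP mul1mx -!mulmxA PP mulmx1.
have := qA (adjmx P *m delta_mx i 0).
rewrite adjmx_mul adjmxK !mulmxA -(mulmxA _ P A) -(mulmxA _ (P *m A)) hD.
by rewrite quad_delta mxE eqxx mulr1n.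
Qed.

Lemma diag_gram n (P : 'M[C]_n) (d : 'rV[C]_n) : (forall i, 0 <= d 0 i) ->
  adjmx P *m diag_mx d *m P = adjmx (diag_mx (\row_i sqrtC (d 0 i)) *m P)
                              *m (diag_mx (\row_i sqrtC (d 0 i)) *m P).
Proof.
move=> hd; rewrite adjmx_mul adjmx_diag !mulmxA -[adjmx P *m _ *m diag_mx _]mulmxA.
rewrite mulmx_diag; congr (_ *m diag_mx _ *m _); apply/rowP => i; rewrite !mxE.
by rewrite geC0_conj ?sqrtC_ge0 // -expr2 sqrtCK.
Qed.

Lemma psd_factor n (A : 'M[C]_n) : psd A -> exists W : 'M[C]_n, A = adjmx W *m W.
Proof. by move=> /psd_spectral [P [d [_ _ -> hd]]]; eexists; apply: diag_gram. Qed.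

Lemma psd_tens m n (A : 'M[C]_m) (B : 'M[C]_n) : psd A -> psd B -> psd (A *t B).
Proof.
move=> /psd_factor [W ->] /psd_factor [Z ->].
rewrite -tensmx_mul -adjmx_tens; exact: psd_gram.
Qed.

End Positivity.

Section Tensor.
Variable R : realType.
Local Notation C := (R[i]).

Lemma sum_mxtens_index (V : nmodType) m n (F : 'I_(m * n) -> V) :
  \sum_(p < m * n) F p = \sum_(i < m) \sum_(j < n) F (mxtens_index (i, j)).
Proof.
rewrite pair_big /= (reindex (@mxtens_index m n)) /=; first by apply: eq_bigr => -[].
by exists (@mxtens_unindex m n) => x _; rewrite (mxtens_indexK, mxtens_unindexK).
Qed.

Lemma mxtens_index_eq m n (i i' : 'I_m) (j j' : 'I_n) :
  (mxtens_index (i, j) == mxtens_index (i', j')) = (i == i') && (j == j').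
Proof. by rewrite (can_eq (@mxtens_indexK m n)) xpair_eqE. Qed.

Lemma tens1mx1 m n : (1%:M : 'M[C]_m) *t (1%:M : 'M[C]_n) = 1%:M.
Proof.
apply/matrixP => p q.
case: (mxtens_indexP p) => i j; case: (mxtens_indexP q) => i' j'.
by rewrite tensmxE !mxE mxtens_index_eq -natrM mulnb.
Qed.

Lemma tensmxBl m n p q (A B : 'M[C]_(m, n)) (M : 'M[C]_(p, q)) :
  (A - B) *t M = A *t M - B *t M.
Proof. by apply/matrixP => i j; rewrite !mxE mulrBl. Qed.

Lemma tensmxBr m n p q (A : 'M[C]_(m, n)) (M N : 'M[C]_(p, q)) :
  A *t (M - N) = A *t M - A *t N.
Proof. by apply/matrixP => i j; rewrite !mxE mulrBr. Qed.

Lemma tensmxZl m n p q (c : C) (A : 'M[C]_(m, n)) (M : 'M[C]_(p, q)) :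
  (c *: A) *t M = c *: (A *t M).
Proof. by apply/matrixP => i j; rewrite !mxE mulrA. Qed.

Lemma tensmxZr m n p q (c : C) (A : 'M[C]_(m, n)) (M : 'M[C]_(p, q)) :
  A *t (c *: M) = c *: (A *t M).
Proof. by apply/matrixP => i j; rewrite !mxE mulrCA. Qed.

Lemma tensmx_suml m n p q I (r : seq I) (P : pred I) (F : I -> 'M[C]_(m, n))
    (M : 'M[C]_(p, q)) :
  (\sum_(i <- r | P i) F i) *t M = \sum_(i <- r | P i) F i *t M.
Proof.
apply/matrixP => x y; rewrite !mxE !summxE mulr_suml.
by apply: eq_bigr => i _; rewrite mxE.
Qed.

Lemma mul_tens1mx m1 m n p (A : 'M[C]_(m1, m)) (N : 'M[C]_(m * n, p)) i j q :
  ((A *t 1%:M) *m N) (mxtens_index (i, j)) q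
  = \sum_(i' < m) A i i' * N (mxtens_index (i', j)) q.
Proof.
rewrite mxE sum_mxtens_index; apply: eq_bigr => i' _.
rewrite (bigD1 j) //= big1 ?addr0; first by rewrite tensmxE mxE eqxx mulr1.
by move=> j' nj; rewrite tensmxE mxE eq_sym (negbTE nj) mulr0 mul0r.
Qed.

Lemma mulmx_tens1mx m1 m n p (A : 'M[C]_(m, m1)) (N : 'M[C]_(p, m * n)) i j q :
  (N *m (A *t 1%:M)) q (mxtens_index (i, j))
  = \sum_(i' < m) N q (mxtens_index (i', j)) * A i' i.
Proof.
rewrite mxE sum_mxtens_index; apply: eq_bigr => i' _.
rewrite (bigD1 j) //= big1 ?addr0; first by rewrite tensmxE mxE eqxx mulr1.
by move=> j' nj; rewrite tensmxE mxE (negbTE nj) mulr0 mulr0.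
Qed.

Lemma ptrA_tens m n (A : 'M[C]_m) (B : 'M[C]_n) : ptrA (A *t B) = \tr A *: B.
Proof.
apply/matrixP=> j l; rewrite !mxE mulr_suml; apply: eq_bigr => i _.
by rewrite tensmxE.
Qed.

Lemma ptrA_sum m n I (r : seq I) (P : pred I) (F : I -> 'M[C]_(m * n)) :
  ptrA (\sum_(i <- r | P i) F i) = \sum_(i <- r | P i) ptrA (F i).
Proof.
apply/matrixP=> j l; rewrite !mxE summxE.
under eq_bigr do rewrite summxE.
by rewrite exchange_big; apply: eq_bigr => x _; rewrite mxE.
Qed.

Lemma ptrAB m n (M N : 'M[C]_(m * n)) : ptrA (M - N) = ptrA M - ptrA N.
Proof.
by apply/matrixP=> j l; rewrite !mxE -sumrB; apply: eq_bigr => i _; rewrite !mxE.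
Qed.

Lemma ptrAZ m n (c : C) (M : 'M[C]_(m * n)) : ptrA (c *: M) = c *: ptrA M.
Proof.
by apply/matrixP=> j l; rewrite !mxE mulr_sumr; apply: eq_bigr => i _; rewrite mxE.
Qed.

Lemma mxtrace_ptrA m n (M : 'M[C]_(m * n)) : \tr (ptrA M) = \tr M.
Proof.
rewrite /mxtrace sum_mxtens_index exchange_big /=; apply: eq_bigr => j _.
by rewrite mxE.
Qed.

Lemma ptrA_tens1mxC m n (A : 'M[C]_m) (N : 'M[C]_(m * n)) :
  ptrA ((A *t 1%:M) *m N) = ptrA (N *m (A *t 1%:M)).
Proof.
apply/matrixP=> j l; rewrite !mxE.
under eq_bigr do rewrite mul_tens1mx.
under [RHS]eq_bigr do rewrite mulmx_tens1mx.
rewrite exchange_big /=; apply: eq_bigr => i _; apply: eq_bigr => i' _.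
by rewrite mulrC.
Qed.

(* The Kraus operators of the partial trace: [<i| (x) 1]. *)
Definition ptrA_kraus m n (i : 'I_m) : 'M[C]_(m * n, n) :=
  \matrix_(p, j) ((p == mxtens_index (i, j))%:R).

Lemma ptrA_krausE m n (M : 'M[C]_(m * n)) :
  ptrA M = \sum_i adjmx (ptrA_kraus n i) *m M *m ptrA_kraus n i.
Proof.
apply/matrixP=> j l; rewrite !mxE summxE; apply: eq_bigr => i _.
rewrite !mxE (bigD1 (mxtens_index (i, l))) //= big1 ?addr0; last first.
  by move=> p /negbTE np; rewrite !mxE np mulr0.
rewrite !mxE eqxx mulr1 (bigD1 (mxtens_index (i, j))) //= big1 ?addr0; last first.
  by move=> p /negbTE np; rewrite !mxE np rmorph0 mul0r.
by rewrite !mxE eqxx rmorph1 mul1r.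
Qed.

Lemma psd_ptrA m n (M : 'M[C]_(m * n)) : psd M -> psd (ptrA M).
Proof. by move=> hM; rewrite ptrA_krausE; apply: psd_sum => i _; apply: psd_adj_mul. Qed.

End Tensor.

Section OperatorNorm.
Variable R : realType.
Local Notation C := (R[i]).

Lemma vnorm_sqr n (u : 'cV[C]_n) : ((vnorm u ^+ 2)%:C)%C = (adjmx u *m u) 0 0.
Proof.
rewrite /vnorm sqr_sqrtr; last by apply: sumr_ge0 => i _; rewrite addr_ge0 ?sqr_ge0.
rewrite rmorph_sum mxE; apply: eq_bigr => i _.
etransitivity; first exact: add_Re2_Im2.
by rewrite normCK !mxE mulrC.
Qed.

Lemma vnorm_ge0 n (u : 'cV[C]_n) : 0 <= vnorm u.
Proof. exact: sqrtr_ge0. Qed.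

Lemma vnorm1_quad n (u : 'cV[C]_n) : vnorm u = 1 -> (adjmx u *m u) 0 0 = 1.
Proof. by move=> h; rewrite -vnorm_sqr h expr1n. Qed.

Lemma ge0_RRe (z : C) : 0 <= z -> z = ((complex.Re z)%:C)%C.
Proof. by move=> z0; rewrite RRe_real // ger0_real. Qed.

Lemma quad_diag n (w : 'cV[C]_n) (e : 'rV[C]_n) :
  (adjmx w *m diag_mx e *m w) 0 0 = \sum_r e 0 r * ((w r 0)^* * w r 0).
Proof.
rewrite mxE; apply: eq_bigr => r _; rewrite mxE (bigD1 r) //= big1 ?addr0.
  by rewrite !mxE eqxx mulr1n mulrCA mulrA.
by move=> s nsr; rewrite !mxE (negbTE nsr) mulr0n mulr0.
Qed.

(* On unit vectors the quadratic form of [P^* diag e P] is a convex combination of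
   the [e r]. *)
Lemma quad_unitary_diag_le n (P : 'M[C]_n) (e : 'rV[C]_n) (u : 'cV[C]_n) :
  adjmx P *m P = 1%:M -> (forall r, 0 <= e 0 r) -> vnorm u = 1 ->
  (adjmx u *m (adjmx P *m diag_mx e *m P) *m u) 0 0 <= \sum_r e 0 r.
Proof.
move=> PP e0 u1; set w := P *m u.
have w0 r : 0 <= (w r 0)^* * w r 0 by rewrite mulrC mul_conjC_ge0.
have w1 : \sum_r (w r 0)^* * w r 0 = 1.
  have ww : adjmx w *m w = adjmx u *m u.
    by rewrite /w adjmx_mul -mulmxA (mulmxA (adjmx P)) PP mul1mx.
  by rewrite -(vnorm1_quad u1) -ww mxE; apply: eq_bigr => r _; rewrite adjmxE.
rewrite !mulmxA -adjmx_mul -mulmxA quad_diag; apply: ler_sum => r _.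
rewrite ler_piMr // -w1 (bigD1 r) //= lerDl; exact: sumr_ge0.
Qed.

Section PsdSpectral.
Variables (n : nat) (X P : 'M[C]_n) (d : 'rV[C]_n).
Hypotheses (PP : P *m adjmx P = 1%:M) (PP' : adjmx P *m P = 1%:M).
Hypotheses (hX : adjmx X = X) (eX : X = adjmx P *m diag_mx d *m P).
Hypothesis d_ge0 : forall i, 0 <= d 0 i.

Lemma opnorm_ubound :
  has_ubound [set vnorm (X *m v) | v in [set v : 'cV[C]_n | vnorm v = 1]].
Proof.
exists (Num.sqrt (\sum_r complex.Re (d 0 r) ^+ 2)) => _ [u /= u1 <-].
rewrite -(ger0_norm (vnorm_ge0 (X *m u))) -sqrtr_sqr ler_sqrt; last first.
  by apply: sumr_ge0 => r _; rewrite sqr_ge0.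
pose e := \row_r (d 0 r * d 0 r).
have dd r : ((complex.Re (d 0 r) ^+ 2)%:C)%C = e 0 r.
  by rewrite rmorphXn /= -ge0_RRe // mxE.
have XX : adjmx X *m X = adjmx P *m diag_mx e *m P.
  by rewrite hX {1 2}eX !mulmxA -[_ *m P *m adjmx P]mulmxA PP mulmx1
    -[_ *m diag_mx d *m diag_mx d]mulmxA mulmx_diag.
rewrite -lecR vnorm_sqr rmorph_sum /= adjmx_mul -mulmxA [adjmx X *m _]mulmxA XX.
under eq_bigr do rewrite dd.
by rewrite mulmxA; apply: quad_unitary_diag_le => // r; rewrite mxE mulr_ge0.
Qed.

Lemma spectral_le_opnorm i : d 0 i <= ((opnorm X)%:C)%C.
Proof.
pose v := adjmx P *m (delta_mx i 0 : 'cV[C]_n).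
have v1 : vnorm v = 1.
  apply/eqP; rewrite -(@eqrXn2 _ 2) ?vnorm_ge0 // expr1n; apply/eqP/complexI.
  rewrite vnorm_sqr adjmx_mul adjmxK mulmxA -(mulmxA _ P).
  by rewrite PP mulmx1 adjmx_delta mul_delta_mx mxE !eqxx.
have Xv : X *m v = d 0 i *: v.
  rewrite eX /v !mulmxA -[_ *m P *m adjmx P]mulmxA PP mulmx1 -mulmxA mul_diag_mx.
  rewrite scalemxAr; congr (_ *m _); apply/matrixP => r q; rewrite !mxE.
  by case: eqVneq => [->|]; rewrite ?andbF ?mulr0.
rewrite (ge0_RRe (d_ge0 i)) lecR; apply: (ub_le_sup opnorm_ubound).
exists v => //; apply/eqP; rewrite -(@eqrXn2 _ 2) ?vnorm_ge0 //; last first.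
  by rewrite -lecR -ge0_RRe.
apply/eqP/complexI; rewrite vnorm_sqr Xv adjmxZ -scalemxAl -scalemxAr scalerA mxE.
rewrite (vnorm1_quad v1) mulr1.
by rewrite geC0_conj // rmorphXn /= -ge0_RRe // expr2.
Qed.

End PsdSpectral.

Lemma psd_opnorm_sub n (X : 'M[C]_n) (c : R) : psd X -> opnorm X <= c ->
  psd ((c%:C)%C *: 1%:M - X).
Proof.
move=> hX hc; have [P [d [PP PP' eX d0]]] := psd_spectral hX.
have -> : (c%:C)%C *: 1%:M - X = adjmx P *m diag_mx (\row_i ((c%:C)%C - d 0 i)) *m P.
  have -> : diag_mx (\row_i ((c%:C)%C - d 0 i)) = (c%:C)%C *: 1%:M - diag_mx d.
    by apply/matrixP => p q; rewrite !mxE mulrnBl mulr_natr.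
  by rewrite eX mulmxBr mulmxBl -scalemxAr mulmx1 -scalemxAl PP' -mulmxA.
rewrite diag_gram; first exact: psd_gram.
move=> i; rewrite mxE subr_ge0.
by apply: le_trans (spectral_le_opnorm PP PP' hX.1 eX d0 i) _; rewrite lecR.
Qed.

End OperatorNorm.

Section Channels.
Variable R : realType.
Local Notation C := (R[i]).

Lemma eq_ampl n m k (E E' : 'M[C]_n -> 'M[C]_m) (M : 'M[C]_(n * k)) :
  E =1 E' -> ampl k E M = ampl k E' M.
Proof. by move=> h; apply/matrixP => p q; rewrite !mxE h. Qed.

Lemma ampl_add n m k (E1 E2 : 'M[C]_n -> 'M[C]_m) (M : 'M[C]_(n * k)) :
  ampl k (fun N => E1 N + E2 N) M = ampl k E1 M + ampl k E2 M.
Proof. by apply/matrixP => p q; rewrite !mxE. Qed.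

Lemma ampl_adj_mul n m k (K : 'M[C]_(n, m)) (M : 'M[C]_(n * k)) :
  ampl k (fun N => adjmx K *m N *m K) M
  = adjmx (K *t (1%:M : 'M[C]_k)) *m M *m (K *t 1%:M).
Proof.
apply/matrixP => p q.
case: (mxtens_indexP p) => i i'; case: (mxtens_indexP q) => j j'.
rewrite mxE !mxtens_indexK /= adjmx_tens adjmx1 mulmx_tens1mx mxE.
apply: eq_bigr => l _; congr (_ * _).
by rewrite mul_tens1mx mxE; apply: eq_bigr => l' _; rewrite !mxE.
Qed.

Lemma psd_ampl_adj_mul n m k (K : 'M[C]_(n, m)) (M : 'M[C]_(n * k)) :
  psd M -> psd (ampl k (fun N => adjmx K *m N *m K) M).
Proof. by move=> hM; rewrite ampl_adj_mul; apply: psd_adj_mul. Qed.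

Definition sum_diag_blocks n (M : 'M[C]_(n + n)) : 'M[C]_n := ulsubmx M + drsubmx M.

Lemma sum_diag_blocks_block n (S T : 'M[C]_n) :
  sum_diag_blocks (block_mx S 0 0 T) = S + T.
Proof. by rewrite /sum_diag_blocks block_mxKul block_mxKdr. Qed.

Lemma sum_diag_blocksE n (M : 'M[C]_(n + n)) :
  sum_diag_blocks M
  = adjmx (col_mx 1%:M 0 : 'M[C]_(n + n, n)) *m M *m col_mx 1%:M 0
  + adjmx (col_mx 0 1%:M : 'M[C]_(n + n, n)) *m M *m col_mx 0 1%:M.
Proof.
rewrite !adjmx_col !adjmx1 !adjmx0 -{2 3}(submxK M) !mul_row_block !mul_row_col.
by rewrite !mul1mx !mul0mx !mulmx0 !mulmx1 !addr0 !add0r.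
Qed.

Lemma tpcpm_sum_diag_blocks n : tpcpm (@sum_diag_blocks n).
Proof.
split.
- by move=> c M N; apply/matrixP => i j; rewrite !mxE mulrDr addrACA.
- by move=> M; rewrite /sum_diag_blocks mxtraceD -{3}(submxK M) mxtrace_block.
- move=> k M hM; rewrite (eq_ampl _ (@sum_diag_blocksE n)) ampl_add.
  by apply: psdD; apply: psd_ampl_adj_mul.
Qed.

End Channels.

Section Domination.
Variables (R : realType) (base : R) (D : Dfam R).
Hypotheses (Ha : propA D) (Hb : propB D) (Hc : propC base D) (Hd : propD D).

Lemma log_inv_le_oppD n (S T : 'M[R[i]]_n) (c : R) :
  (0 < n)%N -> density S -> psd T -> 0 < c -> psd ((c%:C)%C *: T - S) ->
  ((logb base (1 / c))%:E <= - D S T)%E.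
Proof.
move=> n0 dS hT c0 hT'; have hS := dS.1.
have nn0 : (0 < n + n)%N by rewrite addn_gt0 n0.
have := Ha nn0 n0 (@tpcpm_sum_diag_blocks R n) (psd_block hS (psd0 _ _))
  (psd_block hS hT').
rewrite !sum_diag_blocks_block addr0 addrC subrK (Hb n0 n0 hS hS hT').
rewrite (Hd n0 dS) (Hc n0 hS hT c0).
case: (D S T) => [r| |] /=.
- by rewrite -EFinD !lee_fin => h; lra.
- by [].
- by move=> _; exact: leey.
Qed.

End Domination.

Lemma mxtrace_delta (R : pzRingType) n (j : 'I_n) : \tr (delta_mx j j : 'M[R]_n) = 1.
Proof.
rewrite /mxtrace (bigD1 j) //= big1 ?addr0 => [|i /negbTE ni]; by rewrite mxE ?eqxx ?ni.
Qed.

Section MeasuredState.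
Variables (R : realType) (a b : nat) (rho : 'M[R[i]]_(a * b)).
Local Notation C := (R[i]).

Definition cond_state (Y : 'M[C]_a) : 'M[C]_b := ptrA ((Y *t 1%:M) *m rho).

Lemma cond_stateB Y1 Y2 : cond_state (Y1 - Y2) = cond_state Y1 - cond_state Y2.
Proof. by rewrite /cond_state tensmxBl mulmxBl ptrAB. Qed.

Lemma cond_stateZ c Y : cond_state (c *: Y) = c *: cond_state Y.
Proof. by rewrite /cond_state tensmxZl -scalemxAl ptrAZ. Qed.

Lemma cond_state_sum I (r : seq I) (P : pred I) (F : I -> 'M[C]_a) :
  cond_state (\sum_(i <- r | P i) F i) = \sum_(i <- r | P i) cond_state (F i).
Proof. by rewrite /cond_state tensmx_suml mulmx_suml ptrA_sum. Qed.

Lemma cond_state1 : cond_state 1%:M = ptrA rho.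
Proof. by rewrite /cond_state tens1mx1 mul1mx. Qed.

Lemma psd_cond_state Y : psd rho -> psd Y -> psd (cond_state Y).
Proof.
move=> hrho /psd_factor [V ->]; rewrite /cond_state.
have -> : (adjmx V *m V) *t (1%:M : 'M[C]_b) = (adjmx V *t 1%:M) *m (V *t 1%:M).
  by rewrite tensmx_mul mulmx1.
rewrite -mulmxA ptrA_tens1mxC.
have -> : adjmx V *t (1%:M : 'M[C]_b) = adjmx (V *t 1%:M) by rewrite adjmx_tens adjmx1.
apply: psd_ptrA.
by have := psd_adj_mul (adjmx (V *t (1%:M : 'M[C]_b))) hrho; rewrite adjmxK.
Qed.

Variables (k : nat) (X : 'I_k -> 'M[C]_a).

Lemma ampl_measmapE :
  ampl b (measmap X) rho = \sum_j delta_mx j j *t cond_state (X j).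
Proof.
apply/matrixP => p q.
case: (mxtens_indexP p) => i i'; case: (mxtens_indexP q) => j j'.
rewrite mxE !mxtens_indexK /= mxE summxE.
under eq_bigr do rewrite tensmxE mxE.
case: (eqVneq i j) => [<-|nij]; last first.
  rewrite big1 // => l _.
  by case: eqVneq => [<-|_]; rewrite ?mul0r // eq_sym (negbTE nij) mul0r.
rewrite (bigD1 i) //= big1 ?addr0 => [|l nl]; last by rewrite eq_sym (negbTE nl) mul0r.
rewrite eqxx mul1r mxE /mxtrace; apply: eq_bigr => l _.
by rewrite mul_tens1mx !mxE; apply: eq_bigr => l' _; rewrite !mxE.
Qed.

Hypothesis HX : povm X.

Lemma ptrA_ampl_measmap : ptrA (ampl b (measmap X) rho) = ptrA rho.
Proof.
rewrite ampl_measmapE ptrA_sum -cond_state1 -HX.2 cond_state_sum.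
by apply: eq_bigr => j _; rewrite ptrA_tens mxtrace_delta scale1r.
Qed.

Lemma density_ampl_measmap : density rho -> density (ampl b (measmap X) rho).
Proof.
move=> [hrho trrho]; split; last by rewrite -mxtrace_ptrA ptrA_ampl_measmap mxtrace_ptrA.
rewrite ampl_measmapE; apply: psd_sum => j _.
by apply: psd_tens; [apply: psd_delta | apply: psd_cond_state (HX.1 j)].
Qed.

Lemma psd_cX_sub_ampl_measmap : psd rho ->
  psd (((cX X)%:C)%C *: (1%:M *t ptrA (ampl b (measmap X) rho))
       - ampl b (measmap X) rho).
Proof.
move=> hrho; set c := ((cX X)%:C)%C.
have -> : c *: (1%:M *t ptrA (ampl b (measmap X) rho)) - ampl b (measmap X) rho
          = \sum_j delta_mx j j *t cond_state (c *: 1%:M - X j).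
  rewrite ptrA_ampl_measmap ampl_measmapE -cond_state1 -tensmxZr.
  rewrite (mx1_sum_delta _ k) tensmx_suml -sumrB.
  by apply: eq_bigr => j _; rewrite cond_stateB cond_stateZ tensmxBr.
apply: psd_sum => j _; apply: psd_tens; first exact: psd_delta.
apply: psd_cond_state => //; apply: psd_opnorm_sub (HX.1 j) _.
exact: le_bigmax.
Qed.

End MeasuredState.

Lemma density_dim_gt0 (R : realType) n (rho : 'M[R[i]]_n) : density rho -> (0 < n)%N.
Proof.
by case: n rho => // rho [_]; rewrite /mxtrace big_ord0 => /eqP; rewrite eq_sym oner_eq0.
Qed.

(* Summing [c(X) 1 - X_j >= 0] over [j] gives [k c(X) - 1 >= 0] on the diagonal. *)
Lemma cX_gt0 (R : realType) a k (X : 'I_k -> 'M[R[i]]_a) :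
  (0 < a)%N -> povm X -> 0 < cX X.
Proof.
move=> a0 [X0 X1]; rewrite ltNge; apply/negP => c0.
have : psd (\sum_j (((cX X)%:C)%C *: 1%:M - X j)).
  by apply: psd_sum => j _; apply: psd_opnorm_sub (X0 j) _; apply: le_bigmax.
move=> /psd_diag_ge0 /(_ (Ordinal a0)); rewrite summxE.
under eq_bigr do rewrite !mxE eqxx mulr1.
rewrite sumrB sumr_const card_ord -summxE X1 mxE eqxx subr_ge0 mulr1n.
rewrite -(rmorph1 (real_complex R)) -rmorphMn lecR.
by move=> /le_trans/(_ (mulrn_wle0 k c0)); rewrite ler10.
Qed.

Theorem lemma2 (R : realType) (base : R) (hbase : 1 < base)
  (D : Dfam R) (Ha : propA D) (Hb : propB D) (Hc : propC base D) (Hd : propD D)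
  (f : cform) (a b k : nat) (X : 'I_k -> 'M[R[i]]_a) (HX : povm X)
  (rho : 'M[R[i]]_(a * b)) (Hrho : density rho) :
  ((logb base (1 / cX X))%:E <= HK f D (ampl b (measmap X) rho))%E.
Proof.
set S := ampl b (measmap X) rho.
have dS : density S := density_ampl_measmap HX Hrho.
have a0 : (0 < a)%N by move: (density_dim_gt0 Hrho); rewrite muln_gt0 => /andP[].
have T0 : psd ((1%:M : 'M_k) *t ptrA S).
  by apply: psd_tens; [apply: psd1 | apply: psd_ptrA dS.1].
have key := log_inv_le_oppD Ha Hb Hc Hd (density_dim_gt0 dS) dS T0 (cX_gt0 a0 HX)
  (psd_cX_sub_ampl_measmap HX Hrho.1).
case: f => //=; apply: le_trans key _; apply: ereal_sup_ubound.
by exists (ptrA S) => //; split; [apply: psd_ptrA dS.1 | rewrite mxtrace_ptrA dS.2].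
Qed.
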